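(* For all $\theta,\theta_0>0$ and every probability distribution $F$ on $(0,\infty)$, \[ \| p_{\theta,F}-p_{\theta_0,F}\|_1 \le \frac{2|\theta-\theta_0|}{\theta_0}. \]
   Context: For $\theta>0$ and a finite measure $F$ on $(0,\infty)$, the exponential frailty density on $(0,\infty)^2$ is $p_{\theta,F}(x,y)=\int z^2\theta e^{-z(x+\theta y)}\,dF(z)$ (the density of $(X,Y)$ when, given $Z\sim F$, $X$ and $Y$ are independent exponentials with rates $Z$ and $\theta Z$). $\|\cdot\|_1$ denotes the $L^1$ norm with respect to Lebesgue measure on $(0,\infty)^2$. *)

From HB Require Import structures.
From mathcomp Require Import all_boot all_order all_algebra.
From mathcomp Require Import all_classical all_reals all_analysis.
Set Implicit Arguments. Unset Strict Implicit. Unset Printing Implicit Defensive.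
Import Order.TTheory GRing.Theory Num.Theory.
Import numFieldNormedType.Exports.
Local Open Scope classical_set_scope.
Local Open Scope ring_scope.

Definition pos_half {R : realType} : set R := `]0, +oo[%classic.

(* The exponential frailty density
   p_{theta,F}(x,y) = \int z^2 theta exp(-z (x + theta y)) dF(z),
   F a measure on (0,oo), represented as a measure on R and integrated
   over (0,oo). *)
Definition frailty_density {R : realType} (F : {measure set R -> \bar R})
  (theta : R) (xy : R * R) : \bar R :=
  (\int[F]_(z in pos_half)
     ((z ^+ 2 * theta * expR (- (z * (xy.1 + theta * xy.2))))%:E))%E.

Definition L1_dist_pos_quadrant {R : realType}
  (f g : R * R -> \bar R) : \bar R :=
  (\int[(@lebesgue_measure R) \x (@lebesgue_measure R)]_(xy in pos_half `*` pos_half)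
     `|f xy - g xy|)%E.

(* The two densities differ only through the factor
   theta exp(-theta z y), so after integrating out x (which turns
   z^2 exp(-z x) into z) it suffices to bound
   |theta exp(-theta u) - theta0 exp(-theta0 u)| by
   |theta - theta0| exp(-theta0 u) + theta |exp(-theta u) - exp(-theta0 u)|,
   whose integral over u = z y in (0, oo) is 2 |theta - theta0| / (theta0 z).
   Tonelli exchanges the F-integral with the Lebesgue integral, and F has
   mass 1 on (0, oo). *)

From HB Require Import structures.
From mathcomp Require Import all_boot all_order all_algebra.
From mathcomp Require Import all_classical all_reals all_analysis.
From mathcomp Require Import ring measurable_realfun.
Import Order.TTheory GRing.Theory Num.Theory.
Import numFieldNormedType.Exports.
Local Open Scope classical_set_scope.
Local Open Scope ring_scope.

Section fubini_tonelli_setX.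
Local Open Scope ereal_scope.
Context {d1 d2 : measure_display} {T1 : measurableType d1} {T2 : measurableType d2}.
Context {R : realType}.
Variables (m1 : {sigma_finite_measure set T1 -> \bar R})
          (m2 : {sigma_finite_measure set T2 -> \bar R}).
Context {A : set T1} {B : set T2}.
Hypotheses (mA : measurable A) (mB : measurable B).
Variable f : T1 * T2 -> \bar R.
Hypothesis mf : measurable_fun setT f.
Hypothesis f0 : forall p, 0 <= f p.

Let g := f \_ (A `*` B).

Let mg : measurable_fun setT g.
Proof.
by apply/(measurable_restrictT _ _).1; [exact: measurableX | exact: measurable_funTS].
Qed.

Let g0 p : 0 <= g p.
Proof. exact: erestrict_ge0. Qed.

Let sectionF x :
  (fun x => \int[m2]_(y in B) f (x, y)) \_ A x = \int[m2]_y g (x, y).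
Proof.
rewrite patchE integral_mkcond; case: ifPn => [Ax|/negbTE Ax].
  by apply: eq_integral => y _; rewrite /g !patchE in_setX /= Ax.
by apply/esym/integral0_eq => y _; rewrite /g patchE in_setX /= Ax.
Qed.

Let sectionG y :
  (fun y => \int[m1]_(x in A) f (x, y)) \_ B y = \int[m1]_x g (x, y).
Proof.
rewrite patchE integral_mkcond; case: ifPn => [By|/negbTE By].
  by apply: eq_integral => x _; rewrite /g !patchE in_setX /= By andbT.
by apply/esym/integral0_eq => x _; rewrite /g patchE in_setX /= By andbF.
Qed.

Lemma measurable_fun_integral_setX :
  measurable_fun A (fun x => \int[m2]_(y in B) f (x, y)).
Proof.
apply/(measurable_restrictT _ _).2 => //.
by rewrite (funext sectionF); exact: measurable_fun_fubini_tonelli_F.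
Qed.

Lemma integral_setX :
  \int[m1 \x m2]_(p in A `*` B) f p = \int[m1]_(x in A) \int[m2]_(y in B) f (x, y).
Proof.
by rewrite integral_mkcond (fubini_tonelli1 g) // [RHS]integral_mkcond (funext sectionF).
Qed.

Lemma fubini_tonelli_setX :
  \int[m1]_(x in A) \int[m2]_(y in B) f (x, y) =
  \int[m2]_(y in B) \int[m1]_(x in A) f (x, y).
Proof.
rewrite integral_mkcond (funext sectionF) [RHS]integral_mkcond (funext sectionG).
exact: fubini_tonelli.
Qed.

End fubini_tonelli_setX.

Ltac solve_measurable :=
  try apply: measurable_funTS;
  repeat first [ exact: measurable_cst | exact: measurable_id
  | exact: measurable_fst | exact: measurable_snd
  | apply: (measurableT_comp (@EFin_measurable _ setT)) | apply: emeasurable_funB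
  | apply: (measurableT_comp (@abse_measurable _ setT))
  | apply: measurable_funD | apply: measurable_funB | apply: measurable_funM
  | apply: measurable_funN
  | apply: (measurableT_comp (@measurable_expR _))
  | apply: (measurableT_comp (@normr_measurable _ setT))
  | apply: (measurableT_comp measurable_fst)
  | apply: (measurableT_comp measurable_snd) ].

Local Hint Extern 0 (measurable pos_half) => solve [exact: measurable_itv] : core.

Lemma pos_halfE (R : realType) (x : R) : pos_half x = (0 < x) :> Prop.
Proof. by rewrite /pos_half /= in_itv /= andbT. Qed.

Section exponential_integrals.
Variable R : realType.
Local Notation mu := (@lebesgue_measure R).

Lemma integral_expRN_pos_half (c : R) : 0 < c ->
  (\int[mu]_(y in pos_half) (expR (- (c * y)))%:E = (c^-1)%:E)%E.
Proof.
move=> c0.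
have pdf1 : (\int[mu]_(y in pos_half) (c * expR (- (c * y)))%:E = 1)%E.
  rewrite integral_itv_obnd_cbnd; last by solve_measurable.
  rewrite -(integral_exponential_pdf c0) integral_mkcond.
  by apply: eq_integral => y _; rewrite /exponential_pdf !patchE mulNr; case: ifPn.
transitivity (\int[mu]_(y in pos_half) ((c^-1)%:E * (c * expR (- (c * y)))%:E))%E.
  by apply: eq_integral => y _; rewrite -EFinM mulKf ?gt_eqF.
rewrite ge0_integralZl_EFin ?pdf1 ?mule1 ?invr_ge0 ?ltW //.
- by move=> y _; rewrite lee_fin mulr_ge0 ?expR_ge0 ?ltW.
- by solve_measurable.
Qed.

Lemma integral_dist_expRN_pos_half (a b : R) : 0 < a -> 0 < b ->
  (\int[mu]_(y in pos_half) (`|expR (- (a * y)) - expR (- (b * y))|)%:E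
   = (`|a^-1 - b^-1|)%:E)%E.
Proof.
wlog le_ba : a b / b <= a => [hwlog a0 b0|a0 b0].
  have [/hwlog->//|/ltW/hwlog ab] := leP b a.
  by rewrite distrC -ab //; apply: eq_integral => y _; rewrite distrC.
have split_expR : (\int[mu]_(y in pos_half) (expR (- (b * y)))%:E =
    \int[mu]_(y in pos_half) ((`|expR (- (a * y)) - expR (- (b * y))|)%:E
                              + (expR (- (a * y)))%:E))%E.
  apply: eq_integral => y; rewrite inE pos_halfE => y0.
  rewrite -EFinD ler0_norm ?subr_le0 ?opprB ?subrK //.
  by rewrite ler_expR lerN2 ler_pM2r.
rewrite ge0_integralD // in split_expR; [|by solve_measurable..].
rewrite !integral_expRN_pos_half // in split_expR.
rewrite -[LHS](addeK (x := (a^-1)%:E)) // -split_expR.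
by rewrite -EFinB distrC ger0_norm // subr_ge0 lef_pV2 ?posrE.
Qed.

Lemma integral_sqr_expRN_pos_half (z : R) : 0 < z ->
  (\int[mu]_(x in pos_half) (z ^+ 2 * expR (- (z * x)))%:E = z%:E)%E.
Proof.
move=> z0; under eq_integral do rewrite EFinM.
rewrite ge0_integralZl_EFin ?sqr_ge0 //; last by solve_measurable.
by rewrite integral_expRN_pos_half // -EFinM expr2 mulfK ?gt_eqF.
Qed.

End exponential_integrals.

Lemma sqr_mul_expRN_le2 (R : realType) (u : R) : 0 <= u -> u ^+ 2 * expR (- u) <= 2.
Proof.
move=> u0; rewrite expRN ler_pdivrMr ?expR_gt0 //.
apply: le_trans (ler_wpM2l (ler0n _ 2) (expR_ge1Dxn 1 u0)).
by rewrite mulrDr mulr1 mulrCA divff // mulr1 lerDr.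
Qed.

Section frailty.
Context {R : realType}.
Local Notation mu := (@lebesgue_measure R).

Definition frailty_kernel (t : R) (xy : R * R) (z : R) : R :=
  z ^+ 2 * t * expR (- (z * (xy.1 + t * xy.2))).

Lemma frailty_densityE (F : {measure set R -> \bar R}) t xy :
  frailty_density F t xy = (\int[F]_(z in pos_half) (frailty_kernel t xy z)%:E)%E.
Proof. by []. Qed.

Lemma frailty_kernel_ge0 t xy z : 0 <= t -> 0 <= frailty_kernel t xy z.
Proof. by move=> t0; rewrite /frailty_kernel mulr_ge0 ?expR_ge0 // mulr_ge0 // sqr_ge0. Qed.

Lemma frailty_kernel_le t xy z : 0 < t -> 0 < xy.1 -> 0 < xy.2 -> 0 <= z ->
  frailty_kernel t xy z <= 2 * t / (xy.1 + t * xy.2) ^+ 2.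
Proof.
move=> t0 x0 y0 z0; set s := xy.1 + t * xy.2.
have s0 : 0 < s by rewrite addr_gt0 ?mulr_gt0.
rewrite (_ : frailty_kernel _ _ _ = t * ((z * s) ^+ 2 * expR (- (z * s))) / s ^+ 2).
  rewrite [2 * t]mulrC ler_pM2r ?invr_gt0 ?exprn_gt0 // ler_pM2l //.
  exact: sqr_mul_expRN_le2 (mulr_ge0 z0 (ltW s0)).
by rewrite /frailty_kernel -/s; field; rewrite gt_eqF.
Qed.

Lemma integrable_frailty_kernel (F : {finite_measure set R -> \bar R}) t xy :
  0 < t -> 0 < xy.1 -> 0 < xy.2 -> F.-integrable pos_half (EFin \o frailty_kernel t xy).
Proof.
move=> t0 x0 y0; apply/integrableP; split; first by rewrite /frailty_kernel; solve_measurable.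
apply: (@le_lt_trans _ _ (\int[F]_(z in pos_half) (2 * t / (xy.1 + t * xy.2) ^+ 2)%:E)%E).
  apply: ge0_le_integral => //.
  - by rewrite /frailty_kernel; solve_measurable.
  - move=> z; rewrite pos_halfE => z0.
    by rewrite /= lee_fin ger0_norm ?frailty_kernel_ge0 ?frailty_kernel_le ?ltW.
rewrite integral_cst // lte_mul_pinfty //.
- by rewrite lee_fin divr_ge0 ?sqr_ge0 // mulr_ge0 // ltW.
- by rewrite ltey_eq fin_num_measure.
Qed.

Lemma measurable_frailty_density (F : {sigma_finite_measure set R -> \bar R}) t :
  0 <= t -> measurable_fun setT (frailty_density F t).
Proof.
move=> t_ge0; apply: (measurable_fun_integral_setX F _ _
  (fun p => (frailty_kernel t p.1 p.2)%:E)) => //.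
- by rewrite /frailty_kernel; solve_measurable.
- by move=> p; rewrite lee_fin frailty_kernel_ge0.
Qed.

Definition frailty_majorant (t t0 : R) (p : (R * R) * R) : R :=
  p.2 ^+ 2 * expR (- (p.2 * p.1.1)) *
  (`|t - t0| * expR (- (t0 * p.2 * p.1.2))
   + t * `|expR (- (t * p.2 * p.1.2)) - expR (- (t0 * p.2 * p.1.2))|).

Lemma frailty_majorant_ge0 t t0 p : 0 <= t -> 0 <= frailty_majorant t t0 p.
Proof.
move=> t_ge0; apply: mulr_ge0; first by rewrite mulr_ge0 ?sqr_ge0 ?expR_ge0.
by rewrite addr_ge0 ?mulr_ge0 ?expR_ge0.
Qed.

Lemma frailty_kernel_dist_le t t0 xy z : 0 <= t ->
  `|frailty_kernel t xy z - frailty_kernel t0 xy z| <= frailty_majorant t t0 (xy, z).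
Proof.
move=> t_ge0.
have expR_split u : expR (- (z * (xy.1 + u * xy.2))) =
    expR (- (z * xy.1)) * expR (- (u * z * xy.2)).
  by rewrite -expRD; congr expR; ring.
rewrite /frailty_kernel /frailty_majorant /= !expR_split.
set a := z ^+ 2 * expR (- (z * xy.1)).
set e := expR (- (t * z * xy.2)); set e0 := expR (- (t0 * z * xy.2)).
have a_ge0 : 0 <= a by rewrite mulr_ge0 ?sqr_ge0 ?expR_ge0.
rewrite (_ : _ - _ = a * ((t - t0) * e0 + t * (e - e0))); last by rewrite /a; ring.
rewrite normrM (ger0_norm a_ge0) ler_wpM2l //.
apply: le_trans (ler_normD _ _) _.
by rewrite !normrM (ger0_norm (expR_ge0 _)) (ger0_norm t_ge0).
Qed.

Lemma integral_frailty_majorant_y (t t0 z : R) : 0 < t -> 0 < t0 -> 0 < z ->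
  (\int[mu]_(y in pos_half) (`|t - t0| * expR (- (t0 * z * y))
     + t * `|expR (- (t * z * y)) - expR (- (t0 * z * y))|)%:E
   = (2 * `|t - t0| / (t0 * z))%:E)%E.
Proof.
move=> t_gt0 t0_gt0 z_gt0; have t_ge0 := ltW t_gt0.
under eq_integral do rewrite EFinD.
rewrite ge0_integralD //; last 3 first.
- by solve_measurable.
- by move=> y _; rewrite lee_fin mulr_ge0.
- by solve_measurable.
under eq_integral do rewrite EFinM.
under [X in (_ + X)%E]eq_integral do rewrite EFinM.
rewrite !ge0_integralZl_EFin //; [|by solve_measurable..].
rewrite integral_expRN_pos_half ?mulr_gt0 // integral_dist_expRN_pos_half ?mulr_gt0 //.
rewrite -!EFinM -EFinD; congr EFin.
have -> : (t * z)^-1 - (t0 * z)^-1 = (t0 - t) / (t * t0 * z).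
  by field; rewrite !gt_eqF.
rewrite normrM (gtr0_norm (_ : 0 < (t * t0 * z)^-1)) ?invr_gt0 ?mulr_gt0 // distrC.
by field; rewrite !gt_eqF.
Qed.

Lemma integral_frailty_majorant (t t0 z : R) : 0 < t -> 0 < t0 -> 0 < z ->
  (\int[mu]_(x in pos_half) \int[mu]_(y in pos_half) (frailty_majorant t t0 ((x, y), z))%:E
   = (2 * `|t - t0| / t0)%:E)%E.
Proof.
move=> t_gt0 t0_gt0 z_gt0; have t_ge0 := ltW t_gt0.
transitivity (\int[mu]_(x in pos_half)
  ((z ^+ 2 * expR (- (z * x)))%:E * (2 * `|t - t0| / (t0 * z))%:E))%E.
  apply: eq_integral => x _.
  rewrite -integral_frailty_majorant_y // -ge0_integralZl_EFin //.
  - by move=> y _; rewrite lee_fin addr_ge0 ?mulr_ge0 ?expR_ge0.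
  - by solve_measurable.
  - by rewrite mulr_ge0 ?sqr_ge0 ?expR_ge0.
under eq_integral do rewrite muleC.
rewrite ge0_integralZl_EFin //; last 3 first.
- by move=> x _; rewrite lee_fin mulr_ge0 ?sqr_ge0 ?expR_ge0.
- by solve_measurable.
- by rewrite divr_ge0 // mulr_ge0 // ltW.
rewrite integral_sqr_expRN_pos_half // -EFinM; congr EFin.
by field; rewrite !gt_eqF.
Qed.

Lemma measurable_integral_frailty_majorant (F : {sigma_finite_measure set R -> \bar R})
    t t0 : 0 <= t ->
  measurable_fun setT (fun xy => \int[F]_(z in pos_half) (frailty_majorant t t0 (xy, z))%:E)%E.
Proof.
move=> t_ge0; apply: (measurable_fun_integral_setX F _ _
  (fun p => (frailty_majorant t t0 p)%:E)) => //.
- by rewrite /frailty_majorant; solve_measurable.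
- by move=> p; rewrite lee_fin frailty_majorant_ge0.
Qed.

Lemma integral_quadrant_frailty_majorant (F : {sigma_finite_measure set R -> \bar R})
    (t t0 : R) : 0 < t -> 0 < t0 ->
  (\int[mu \x mu]_(xy in pos_half `*` pos_half)
     \int[F]_(z in pos_half) (frailty_majorant t t0 (xy, z))%:E
   = (2 * `|t - t0| / t0)%:E * F pos_half)%E.
Proof.
move=> t_gt0 t0_gt0; have t_ge0 := ltW t_gt0.
rewrite integral_setX //; last 2 first.
- exact: measurable_integral_frailty_majorant.
- by move=> xy; apply: integral_ge0 => z _; rewrite lee_fin frailty_majorant_ge0.
(* [mu \x mu] carries no canonical sigma-finite structure, so Tonelli is
   applied to the iterated integral, one Lebesgue variable at a time. *)
transitivity (\int[mu]_(x in pos_half) \int[F]_(z in pos_half)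
    \int[mu]_(y in pos_half) (frailty_majorant t t0 ((x, y), z))%:E)%E.
  apply: eq_integral => x _.
  apply: (fubini_tonelli_setX mu F _ _
    (fun p => (frailty_majorant t t0 ((x, p.1), p.2))%:E)) => //.
  - by rewrite /frailty_majorant; solve_measurable.
  - by move=> p; rewrite lee_fin frailty_majorant_ge0.
rewrite (fubini_tonelli_setX mu F _ _
  (fun p => \int[mu]_(y in pos_half) (frailty_majorant t t0 ((p.1, y), p.2))%:E)%E) //.
- rewrite (eq_integral (fun=> (2 * `|t - t0| / t0)%:E)) ?integral_cst //.
  by move=> z; rewrite inE pos_halfE => z_gt0; exact: integral_frailty_majorant.
- apply: (measurable_fun_integral_setX mu _ _
    (fun q => (frailty_majorant t t0 ((q.1.1, q.2), q.1.2))%:E)) => //.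
  + by rewrite /frailty_majorant /=; solve_measurable.
  + by move=> q; rewrite lee_fin frailty_majorant_ge0.
- by move=> p; apply: integral_ge0 => y _; rewrite lee_fin frailty_majorant_ge0.
Qed.

Lemma frailty_density_dist_le (F : {finite_measure set R -> \bar R}) t t0 xy :
  0 < t -> 0 < t0 -> 0 < xy.1 -> 0 < xy.2 ->
  (`|frailty_density F t xy - frailty_density F t0 xy|
   <= \int[F]_(z in pos_half) (frailty_majorant t t0 (xy, z))%:E)%E.
Proof.
move=> t_gt0 t0_gt0 x_gt0 y_gt0.
rewrite !frailty_densityE -integralB_EFin //; [|exact: integrable_frailty_kernel..].
apply: le_trans (le_abse_integral _ _ _) _ => //.
  by rewrite /frailty_kernel; solve_measurable.
apply: ge0_le_integral => //.
- by rewrite /frailty_kernel; solve_measurable.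
- by rewrite /frailty_majorant; solve_measurable.
- by move=> z _; rewrite lee_fin frailty_kernel_dist_le ?ltW.
Qed.

End frailty.

Theorem mainTheorem2 (R : realType) (theta theta0 : R)
  (F : probability R R)
  (Hth : 0 < theta) (Hth0 : 0 < theta0)
  (HF : F pos_half = 1%E) :
  (L1_dist_pos_quadrant (frailty_density F theta) (frailty_density F theta0)
    <= (2 * `|theta - theta0| / theta0)%:E)%E.
Proof.
rewrite /L1_dist_pos_quadrant -[leRHS]mule1 -HF -integral_quadrant_frailty_majorant //.
have measurable_density t : 0 <= t ->
    measurable_fun (pos_half `*` pos_half) (frailty_density F t).
  by move=> t_ge0; apply: measurable_funTS; exact: measurable_frailty_density.
apply: ge0_le_integral => //.
- exact: measurableX.
- apply: measurableT_comp => //.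
  by apply: emeasurable_funB; apply: measurable_density; exact: ltW.
- apply: measurable_funTS.
  by apply: measurable_integral_frailty_majorant; exact: ltW.
- by move=> [x y] []; rewrite !pos_halfE; exact: frailty_density_dist_le.
Qed.
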